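(* Let $n\ge 0$ and $m\ge 2$ be integers with $n\ge1$ or $m\ge3$, let $N=m^{2^n}$, and let $\mathbb{A}$ be the structure defined in the context. Then there is no polymorphism $t:A^{N}\to A$ of $\mathbb{A}$ such that $t(a,n,n,\dots,n)=t(n,a,n,\dots,n)=\dots=t(n,\dots,n,a)=n$ (i.e., $t$ returns $n$ whenever exactly one argument equals $a$ and all other arguments equal $n$).
   Context: Fix integers $n\ge 0$ and $m\ge 2$. Let $A=\{a,0,1,\dots,n\}$. For $i\in\{0,\dots,n+1\}$ let $A_i=\{a,0,1,\dots,i-1\}$, so $A_0=\{a\}$ and $A_{n+1}=A$. For $i\in\{0,\dots,n\}$ let $S_i\subseteq A^{m+1}$ be the relation $$S_i=\Big(A_i\times\{a,i\}^m\setminus\{(a,i,i,\dots,i)\}\Big)\cup\{(j,j,\dots,j)\in A^{m+1}: i<j\le n\}.$$ Let $\mathbb{A}$ be the relational structure with universe $A$ whose relations are $S_0,\dots,S_n$ (each of arity $m+1$) together with every nonempty subset $X\subseteq A$ as a unary relation. A polymorphism of $\mathbb{A}$ is an operation $t:A^k\to A$ compatible with all these relations, where compatibility with a relation $R$ means that applying $t$ coordinatewise to any $k$ tuples of $R$ yields a tuple of $R$. *)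

From mathcomp Require Import all_boot.
Set Implicit Arguments. Unset Strict Implicit. Unset Printing Implicit Defensive.

(* Universe A = {a,0,1,...,n} encoded as option 'I_n.+1 :
   None = a, Some j = j. *)
Definition Auniv (n : nat) : finType := option 'I_n.+1.

Definition is_el (n : nat) (x : Auniv n) (j : nat) : bool :=
  if x is Some y then val y == j else false.

Definition inAi (n i : nat) (x : Auniv n) : bool :=
  if x is Some y then val y < i else true.

Definition S_rel (n m i : nat) (x : 'I_m.+1 -> Auniv n) : Prop :=
  ( (inAi i (x ord0) /\
     (forall j : 'I_m.+1, 0 < val j -> x j = None \/ is_el (x j) i))
    /\ ~ (x ord0 = None /\ (forall j : 'I_m.+1, 0 < val j -> is_el (x j) i)) )
  \/ (exists j : nat, i < j <= n /\ forall l : 'I_m.+1, is_el (x l) j).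

Definition unary_rel (n : nat) (X : {set Auniv n}) (x : 'I_1 -> Auniv n) : Prop :=
  x ord0 \in X.

Definition compatible (T : Type) (k r : nat) (R : ('I_r -> T) -> Prop)
  (t : ('I_k -> T) -> T) : Prop :=
  forall rows : 'I_k -> ('I_r -> T),
    (forall l : 'I_k, R (rows l)) ->
    R (fun j : 'I_r => t (fun l : 'I_k => rows l j)).

Definition polymorphism (n m k : nat) (t : ('I_k -> Auniv n) -> Auniv n) : Prop :=
  (forall i : 'I_n.+1, @compatible (Auniv n) k m.+1 (@S_rel n m (val i)) t) /\
  (forall X : {set Auniv n}, X != set0 -> @compatible (Auniv n) k 1 (@unary_rel n X) t).

From mathcomp Require Import all_boot zify.
From Stdlib Require Import FunctionalExtensionality.
Set Implicit Arguments. Unset Strict Implicit. Unset Printing Implicit Defensive.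

(* Call g pinned at level h with budget s if t returns h on every tuple that keeps
   the entries of g exceeding h and puts a on at most s of the other coordinates
   and h on the rest.  By induction on h, a pinned g has more than m^(2^h) s
   coordinates not exceeding h.  Indeed, let x keep the entries of g exceeding h
   and take values in {a, k, ..., h-1} elsewhere.  If x has at most m s
   a-coordinates, m pinned tuples covering them form with x a matrix whose rows
   lie in S_h, so t x < h.  If x has at most m^(2^(k+1)) s a-coordinates and
   t x does not lie in (k, h), then compatibility with S_k shows that x itself is
   pinned at level k with budget m^(2^k) s, which the bound at level k forbids;
   so the admissible values of t x shrink from [k, h) to [k+1, h), and at k = h
   none is left.  The hypothesis says that the constant tuple a is pinned at
   level n with budget 1, yet it has only m^(2^n) coordinates. *)

Lemma cover_by_blocks (T : finType) (s k : nat) (R : {set T}) : #|R| <= k * s ->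
  exists F : nat -> {set T},
    (forall i, #|F i| <= s) /\ (forall x, x \in R -> exists2 i, i < k & x \in F i).
Proof.
elim: k R => [|k IH] R R_small.
  exists (fun _ => set0); split=> [i|x]; first by rewrite cards0.
  by move: R_small; rewrite mul0n leqn0 cards_eq0 => /eqP ->; rewrite inE.
pose S := [set x in take s (enum R)].
have S_small : #|S| <= s.
  by rewrite cardsE (leq_trans (card_size _)) // size_take_min geq_minl.
have RS_small : #|R :\: S| <= k * s.
  apply: (@leq_trans #|[set x in drop s (enum R)]|).
    apply: subset_leq_card; apply/subsetP => x; rewrite !inE => /andP[xNS xR].
    have : x \in enum R by rewrite mem_enum.
    by rewrite -{1}(cat_take_drop s (enum R)) mem_cat (negbTE xNS).
  rewrite cardsE (leq_trans (card_size _)) // size_drop -cardE; lia.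
have [F [F_small F_cover]] := IH _ RS_small.
exists (fun i => if i is i'.+1 then F i' else S); split; first by case.
move=> x xR; have [xS|xNS] := boolP (x \in S); first by exists 0.
have /F_cover[i ik xFi] : x \in R :\: S by rewrite in_setD xNS xR.
by exists i.+1.
Qed.

Section Polymorphism.

Variables n m : nat.
Local Notation A := (Auniv n).
Local Notation S_ h := (@S_rel n m h).

Definition num (j : nat) : A := Some (inord j).

Definition exceeds (h : nat) (y : A) : bool := if y is Some z then h < z else false.

Definition in_band (k h : nat) (y : A) : bool := if y is Some z then k <= z < h else true.

Lemma is_el_num j : j <= n -> is_el (num j) j.
Proof. by move=> jn; rewrite /= inordK. Qed.

Lemma is_el_eq_num y j : is_el y j -> y = num j.
Proof. by case: y => //= z /eqP <-; rewrite /num inord_val. Qed.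

Lemma num_top : num n = Some ord_max.
Proof. by congr Some; apply: val_inj; rewrite /= inordK. Qed.

Lemma in_band_num k h : k < h -> h <= n -> in_band k h (num k).
Proof. by move=> kh hn; rewrite /= inordK ?leqnn ?kh //; lia. Qed.

Lemma exceedsW k h y : k <= h -> exceeds h y -> exceeds k y.
Proof. by case: y => //= z kh; apply: leq_ltn_trans. Qed.

Lemma S_rel_const h y (r : 'I_m.+1 -> A) : exceeds h y -> (forall j, r j = y) -> S_ h r.
Proof.
case: y => //= z hz r_const; right; exists (val z); split; first by rewrite hz /= -ltnS.
by move=> l; rewrite r_const /=.
Qed.

Lemma S_relI h (r : 'I_m.+1 -> A) : inAi h (r ord0) ->
  (forall j : 'I_m.+1, 0 < j -> r j = None \/ is_el (r j) h) ->
  (r ord0 = None -> exists2 j : 'I_m.+1, 0 < j & r j = None) -> S_ h r.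
Proof.
move=> r0 r_tail r_a; left; split=> // -[r0a tail_h].
by have [j j_gt0 rj] := r_a r0a; have := tail_h j j_gt0; rewrite rj.
Qed.

Lemma S_relE h (r : 'I_m.+1 -> A) : S_ h r ->
  (forall j : 'I_m.+1, 0 < j -> r j = None \/ is_el (r j) h) \/
  exists2 j, h < j & forall l, is_el (r l) j.
Proof. by case=> [[[_ r_tail] _]|[j [/andP[hj _] r_j]]]; [left|right; exists j]. Qed.

Lemma S_rel_num_tail h (r : 'I_m.+1 -> A) : 0 < m -> S_ h r ->
  (forall j : 'I_m.+1, 0 < j -> is_el (r j) h) ->
  exists2 z : 'I_n.+1, r ord0 = Some z & z < h.
Proof.
move=> m_gt0 [[[r0 _] r0_not_a] tail_h|[j [/andP[hj _] r_j]] tail_h].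
  case r0z: (r ord0) r0 => [z|] r0; first by exists z.
  by case: r0_not_a.
have col1 : 1 < m.+1 by [].
have /= := r_j (Ordinal col1); have /= := tail_h (Ordinal col1) isT.
by case: (r _) => //= z /eqP -> /eqP; lia.
Qed.

Variables (N : nat) (t : ('I_N -> A) -> A).
Hypothesis m_gt1 : 1 < m.
Hypothesis t_pol : @polymorphism n m N t.

Lemma polymorphism_conservative x : 0 < N -> exists l, t x = x l.
Proof.
move=> N_gt0; pose X := [set x l | l : 'I_N].
have X_n0 : X != set0 by apply/set0Pn; exists (x (Ordinal N_gt0)); apply: imset_f.
have /imsetP[l _ ->] : t x \in X.
  by apply: (t_pol.2 X X_n0 (fun l _ => x l)) => l; apply: imset_f.
by exists l.
Qed.

Lemma polymorphism_S h (cols : 'I_m.+1 -> 'I_N -> A) : h <= n ->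
  (forall l, S_ h (fun j => cols j l)) -> S_ h (fun j => t (cols j)).
Proof. by rewrite -ltnS => hn; apply: (t_pol.1 (Ordinal hn) (fun l j => cols j l)). Qed.

Definition pin h (g : 'I_N -> A) (U : {set 'I_N}) : 'I_N -> A :=
  fun l => if exceeds h (g l) then g l else if l \in U then None else num h.

Definition low h (g : 'I_N -> A) : {set 'I_N} := [set l | ~~ exceeds h (g l)].

Definition a_positions (x : 'I_N -> A) : {set 'I_N} := [set l | x l == None].

Definition pinned h g s := forall U : {set 'I_N}, #|U| <= s -> t (pin h g U) = num h.

Definition framed h (g : 'I_N -> A) k (x : 'I_N -> A) :=
  forall l, if exceeds h (g l) then x l = g l else in_band k h (x l).

Definition band_bound h k := forall g s x, pinned h g s -> framed h g k x ->
  #|a_positions x| <= m ^ (2 ^ k) * s -> exists2 z : 'I_n.+1, t x = Some z & k <= z < h.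

Lemma a_positions_pin h g U : a_positions (pin h g U) \subset U.
Proof.
apply/subsetP => l; rewrite inE /pin.
by case: ifP => [|_]; [case: (g l) | case: ifP].
Qed.

Lemma framed_exceeds h g k x l : k < h -> framed h g k.+1 x ->
  exceeds k (x l) = (x l != None).
Proof.
move=> kh x_framed; have := x_framed l; case: ifP => [gl ->|_].
  by case: (g l) gl => //= z; apply: ltn_trans.
by case: (x l) => //= z /andP[].
Qed.

Lemma framed_pin h g k x U :
  k < h -> h <= n -> framed h g k.+1 x -> framed h g k (pin k x U).
Proof.
move=> kh hn x_framed l; have := x_framed l; rewrite /pin.
case: ifP => [gl ->|_ xl]; first by rewrite (exceedsW (ltnW kh) gl).
case: (x l) xl => [z /andP[kz zh]|_] /=; first by rewrite kz /= (ltnW kz).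
by case: ifP => // _; apply: in_band_num.
Qed.

Lemma pinned_low_card h g s :
  band_bound h h -> pinned h g s -> m ^ (2 ^ h) * s < #|low h g|.
Proof.
move=> bound g_pinned; rewrite ltnNge; apply/negP => low_small.
pose x l := if exceeds h (g l) then g l else None.
have x_framed : framed h g h x by move=> l; rewrite /x; case: (exceeds h (g l)).
have x_a : a_positions x = low h g.
  by apply/setP => l; rewrite !inE /x; case: ifP => //; case: (g l).
have := bound g s x g_pinned x_framed; rewrite x_a.
by case/(_ low_small) => z _ /andP[hz zh]; lia.
Qed.

Lemma band_bound0 h : h <= n -> band_bound h 0.
Proof.
move=> hn g s x g_pinned x_framed; rewrite expn0 expn1 => x_small.
have [F [F_small F_cover]] := cover_by_blocks x_small.
pose cols (j : 'I_m.+1) := if j == 0 :> nat then x else pin h g (F j.-1).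
have cols_pinned (j : 'I_m.+1) : 0 < j -> is_el (t (cols j)) h.
  by move=> j_gt0; rewrite /cols (gtn_eqF j_gt0) g_pinned ?is_el_num.
suff [z tz zh] : exists2 z : 'I_n.+1, t (cols ord0) = Some z & z < h by exists z.
apply: S_rel_num_tail cols_pinned; first lia.
apply: polymorphism_S => // l; have := x_framed l.
case gl: (exceeds h (g l)) => xl.
  apply: (S_rel_const (y := g l)) => // j.
  by rewrite /cols; case: ifP => _ //; rewrite /pin gl.
apply: S_relI.
- by rewrite /cols /=; case: (x l) xl.
- move=> j j_gt0; rewrite /cols (gtn_eqF j_gt0) /pin gl.
  by case: ifP => _; [left|right; apply: is_el_num].
- move=> xl_a; have [|i im lFi] := F_cover l; first by rewrite inE; apply/eqP.
  by exists (Ordinal (im : i.+1 < m.+1)) => //; rewrite /cols /= /pin gl lFi.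
Qed.

Lemma expn_pow2S k : m ^ (2 ^ k.+1) = m ^ (2 ^ k) * m ^ (2 ^ k).
Proof. by rewrite expnS mul2n -addnn expnD. Qed.

Lemma band_boundS h k : k < h -> h <= n ->
  band_bound k k -> band_bound h k -> band_bound h k.+1.
Proof.
move=> kh hn bound_k bound_hk g s x g_pinned x_framed x_small.
have [|out_band] := boolP (if t x is Some z then k < z < h else false).
  by case: (t x) => // z; exists z.
have x_pinned : pinned k x (m ^ (2 ^ k) * s).
  move=> U U_small; pose xU := pin k x U.
  have xU_small : #|a_positions xU| <= m ^ (2 ^ k) * s.
    exact: leq_trans (subset_leq_card (a_positions_pin _ _ _)) U_small.
  have [z tz /andP[kz zh]] :=
    bound_hk g s xU g_pinned (framed_pin U kh hn x_framed) xU_small.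
  pose cols (j : 'I_m.+1) := if j == 1 :> nat then xU else x.
  have row_S : S_ k (fun j => t (cols j)).
    apply: polymorphism_S => [|l]; first lia.
    case xl: (exceeds k (x l)).
      apply: (S_rel_const (y := x l)) => // j.
      by rewrite /cols; case: ifP => _ //; rewrite /xU /pin xl.
    have xl_a : x l = None.
      by apply/eqP; move: xl; rewrite (framed_exceeds _ kh x_framed) => /negbFE.
    apply: S_relI => [|j _|_]; first by rewrite /cols /= xl_a.
      rewrite /cols; case: ifP => _; last by rewrite xl_a; left.
      rewrite /xU /pin xl; case: ifP => _; [by left|right; apply: is_el_num; lia].
    by exists (Ordinal (m_gt1 : 2 < m.+1)) => //; rewrite /cols /= xl_a.
  have col1 : 1 < m.+1 by lia.
  case: (S_relE row_S) => [tail|[j kj all_j]].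
    have := tail (Ordinal col1) isT; rewrite /cols /= -/xU tz.
    by case=> // /is_el_eq_num <-.
  have := all_j (Ordinal col1); have := all_j ord0; rewrite /cols /= -/xU tz /=.
  by case: (t x) out_band => //= w out_band /eqP wj /eqP zj; lia.
have := pinned_low_card bound_k x_pinned.
have -> : low k x = a_positions x.
  by apply/setP => l; rewrite !inE (framed_exceeds _ kh x_framed) negbK.
by rewrite mulnA -expn_pow2S ltnNge x_small.
Qed.

Lemma band_bound_diag h : h <= n -> band_bound h h.
Proof.
elim/ltn_ind: h => h IH hn.
suff bound_h k : k <= h -> band_bound h k by apply: bound_h.
elim: k => [|k IHk] kh; first exact: band_bound0.
by apply: band_boundS => //; [apply: IH; lia | apply: IHk; lia].
Qed.

End Polymorphism.

(* The argument works for every m >= 2. *)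
Theorem mainTheorem3 (n m : nat) (hm : 2 <= m) (hnm : (1 <= n) || (3 <= m)) :
  ~ exists t : ('I_(m ^ (2 ^ n)) -> Auniv n) -> Auniv n,
      @polymorphism n m (m ^ (2 ^ n)) t /\
      forall p : 'I_(m ^ (2 ^ n)),
        t (fun l => if l == p then None else Some ord_max) = Some ord_max.
Proof.
case=> t [t_pol t_fix].
have N_gt0 : 0 < m ^ (2 ^ n) by rewrite expn_gt0 ltnW.
pose all_a (l : 'I_(m ^ (2 ^ n))) : Auniv n := None.
have all_a_pinned : pinned t n all_a 1.
  move=> U; have [->|[p pU] U_le1] := set_0Vmem U.
    have [l ->] := polymorphism_conservative t_pol (pin n all_a set0) N_gt0.
    by rewrite /pin inE.
  have -> : U = [set p] by apply/eqP; rewrite eq_sym eqEcard sub1set pU cards1.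
  suff -> : pin n all_a [set p] = fun l => if l == p then None else Some ord_max.
    by rewrite t_fix num_top.
  by apply: functional_extensionality => l; rewrite /pin in_set1 num_top.
have all_a_framed : framed n all_a n all_a by [].
have all_a_small : #|a_positions all_a| <= m ^ (2 ^ n) * 1.
  by rewrite muln1 (leq_trans (max_card _)) ?card_ord.
have [z _ /andP[nz zn]] :=
  band_bound_diag hm t_pol (leqnn n) all_a_pinned all_a_framed all_a_small.
by rewrite ltnNge nz in zn.
Qed.
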